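(* Let $A\in\mathbb R^{m\times n}$, $B\in\mathbb R^{d\times n}$ with $m\ge n$, $d\ge n$, and $B$ of full column rank $n$. Let $A=U\Gamma Y^T$, $B=V\Sigma Y^T$ be a reduced GSVD of $(A,B)$ as in the context, and let $1\le k<n$ with $\gamma_1/\sigma_1>\gamma_2/\sigma_2>\dots>\gamma_k/\sigma_k>\gamma_{k+1}/\sigma_{k+1}$. Define $s_A=\mathrm{DEIM}(U_k)$, $s_B=\mathrm{DEIM}(V_k)$, $p=\mathrm{DEIM}(Y_k)$, where $U_k,V_k,Y_k$ are the first $k$ columns of $U,V,Y$. (i) Let $G=AB^{+}$ (which equals $AB^{-1}$ when $B$ is square). Then $\sigma_i>0$ for all $i$, $G=U(\Gamma\Sigma^{-1})V^T$ is a (reduced) singular value decomposition of $G$, and if $W_k$ and $Z_k$ denote any matrices of $k$ dominant left and right singular vectors of $G$, then $\mathrm{DEIM}(W_k)=s_A$ and $\mathrm{DEIM}(Z_k)=s_B$. (ii) If $d=n$ and $B=I_n$, then, with $W_k$ and $Z_k$ any matrices of $k$ dominant left and right singular vectors of $A$, $\mathrm{DEIM}(W_k)=s_A$ and $\mathrm{DEIM}(Z_k)=p$; consequently the factors $C=AP$ and $R=S_A^TA$ (with $P=I_n(:,p)$, $S_A=I_m(:,s_A)$) of the GCUR of $A$ coincide with those of the DEIM-CUR decomposition of $A$.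
   Context: Reduced GSVD: $U\in\mathbb R^{m\times n}$, $V\in\mathbb R^{d\times n}$ have orthonormal columns, $Y\in\mathbb R^{n\times n}$ is nonsingular, $\Gamma=\mathrm{diag}(\gamma_i)$, $\Sigma=\mathrm{diag}(\sigma_i)$ with $\gamma_i,\sigma_i\in[0,1]$, $\gamma_i^2+\sigma_i^2=1$, ordered so that $\gamma_i/\sigma_i$ is nonincreasing, and $A=U\Gamma Y^T$, $B=V\Sigma Y^T$. $B^+$ is the Moore–Penrose pseudoinverse. DEIM index selection: for a matrix $X=[\mathbf x_1,\dots,\mathbf x_k]\in\mathbb R^{N\times k}$ with linearly independent columns, $\mathrm{DEIM}(X)=(s_1,\dots,s_k)$ is defined by: $s_1$ is the smallest index $i$ maximizing $|\mathbf x_1(i)|$; for $j=2,\dots,k$, with $X_{j-1}=[\mathbf x_1,\dots,\mathbf x_{j-1}]$ and $S_{j-1}=I_N(:,(s_1,\dots,s_{j-1}))$, set $\mathbf r_j=\mathbf x_j-X_{j-1}(S_{j-1}^TX_{j-1})^{-1}S_{j-1}^T\mathbf x_j$ and let $s_j$ be the smallest index $i$ maximizing $|\mathbf r_j(i)|$. (Here $I_N(:,s)$ is the matrix of columns of the identity indexed by $s$.) The DEIM-CUR decomposition of a matrix $A$ uses row indices $\mathrm{DEIM}(W_k)$ and column indices $\mathrm{DEIM}(Z_k)$ for the dominant left/right singular vectors $W_k,Z_k$; the GCUR of $(A,B)$ uses column indices $p$ for both $A$ and $B$, row indices $s_A$ for $A$ and $s_B$ for $B$. *)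

From mathcomp Require Import all_boot all_order all_algebra.
From mathcomp Require Import reals.
Set Implicit Arguments. Unset Strict Implicit. Unset Printing Implicit Defensive.
Import Order.TTheory GRing.Theory Num.Theory.
Local Open Scope ring_scope.

Section Defs.
Variable R : realType.

(* entry (r, c) of X, with c given as a natural number (0 outside range) *)
Definition xentry N M (X : 'M[R]_(N, M)) (r : 'I_N) (c : nat) : R :=
  oapp (X r) 0 (insub c).

(* X(:, 1:k) : the first k columns of X (0-based columns 0..k-1) *)
Definition first_cols N M (k : nat) (X : 'M[R]_(N, M)) : 'M[R]_(N, k) :=
  \matrix_(r < N, c < k) xentry X r c.

(* I_N(:, s) for an index sequence s (0-based), with k columns *)
Definition selmx N k (s : seq nat) : 'M[R]_(N, k) :=
  \matrix_(r < N, c < k) ((nat_of_ord r == nth 0%N s c)%:R).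

Definition first_argmax N (v : 'cV[R]_N) : nat :=
  find (fun i : 'I_N => [forall j : 'I_N, `|v j 0| <= `|v i 0|]) (enum 'I_N).

(* residual r_{j+1} = x_{j+1} - X_j (S_j^T X_j)^{-1} S_j^T x_{j+1}
   (0-based: j already selected indices s, next column is column j) *)
Definition deim_residual N M (X : 'M[R]_(N, M)) (s : seq nat) (j : nat)
  : 'cV[R]_N :=
  let x : 'cV[R]_N := \matrix_(r < N, c < 1) xentry X r j in
  let Xj := first_cols j X in
  let S := selmx N j s in
  x - Xj *m invmx (S^T *m Xj) *m S^T *m x.

Fixpoint deim_rec N M (X : 'M[R]_(N, M)) (j : nat) : seq nat :=
  match j with
  | 0 => [::]
  | j'.+1 => let s := deim_rec X j' in
             rcons s (first_argmax (deim_residual X s j'))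
  end.

(* DEIM(X) = (s_1, ..., s_k) for X with k columns (indices 0-based) *)
Definition DEIM N k (X : 'M[R]_(N, k)) : seq nat := deim_rec X k.

Definition orthonormal_cols N M (X : 'M[R]_(N, M)) : Prop :=
  X^T *m X = 1%:M.

Definition is_svd p q r (G : 'M[R]_(p, q)) (W : 'M[R]_(p, r)) (s : 'rV[R]_r)
  (Z : 'M[R]_(q, r)) : Prop :=
  [/\ orthonormal_cols W, orthonormal_cols Z,
      (forall i : 'I_r, 0 <= s 0 i),
      (forall i j : 'I_r, (i <= j)%N -> s 0 j <= s 0 i)
    & G = W *m diag_mx s *m Z^T].

Definition is_pinv p q (B : 'M[R]_(p, q)) (X : 'M[R]_(q, p)) : Prop :=
  [/\ B *m X *m B = B, X *m B *m X = X,
      (B *m X)^T = B *m X & (X *m B)^T = X *m B].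

(* reduced GSVD of (A, B) as in the context; the ordering
   "gamma_i/sigma_i nonincreasing" is written cross-multiplied
   (sigma_i may be 0, meaning gamma_i/sigma_i = +oo). *)
Definition is_gsvd m d n (A : 'M[R]_(m, n)) (B : 'M[R]_(d, n))
  (U : 'M[R]_(m, n)) (V : 'M[R]_(d, n)) (Y : 'M[R]_n)
  (gam sig : 'rV[R]_n) : Prop :=
  [/\ orthonormal_cols U /\ orthonormal_cols V, Y \in unitmx,
      (forall i, [/\ (0 <= gam 0 i <= 1), (0 <= sig 0 i <= 1)
                 & (gam 0 i ^+ 2 + sig 0 i ^+ 2 = 1)]),
      (forall i j : 'I_n, (i <= j)%N -> gam 0 j * sig 0 i <= gam 0 i * sig 0 j)
    & A = U *m diag_mx gam *m Y^T /\ B = V *m diag_mx sig *m Y^T].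

(* gamma_1/sigma_1 > ... > gamma_k/sigma_k > gamma_{k+1}/sigma_{k+1}
   (cross-multiplied; 0-based indices i, i+1 with i < k) *)
Definition strict_top n (k : nat) (gam sig : 'rV[R]_n) : Prop :=
  forall i j : 'I_n, (i < k)%N -> j = i.+1 :> nat ->
    gam 0 j * sig 0 i < gam 0 i * sig 0 j.

End Defs.
Arguments selmx {R} N k s.

(* The proof rests on two independent facts.
   1. DEIM sees only directions: if the columns of X are linearly independent,
      then every interpolation system S_j^T X_j is invertible (a bordered
      matrix whose Schur complement is the pivot entry of a nonzero residual),
      every residual of X D is the corresponding residual of X scaled by a
      diagonal entry of D, so DEIM (X D) = DEIM X for any invertible diagonal D.
   2. Simple dominant singular vectors are unique up to scaling: if
      G = U diag(lam) V^T = W diag(s) Z^T are two SVDs and lam_1 > ... > lam_k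
      > lam_{k+1}, then s_i = lam_i and W(:,i) = c_i U(:,i) (c_i <> 0) for i < k,
      by strong induction on i, using C = U^T W and orthonormality.
   The GSVD gives A = U diag(gam/sig) T and B = V T with T = Sigma Y^T
   invertible (sig > 0 by the rank of B), so A B^+ = U diag(gam/sig) V^T is an
   SVD; for B = I moreover V = Y Sigma.  Applying 2 and then 1 to the left and
   right singular vectors yields the theorem. *)
From mathcomp Require Import all_boot all_order all_algebra.
From mathcomp Require Import reals.
From mathcomp Require Import ring.
Set Implicit Arguments. Unset Strict Implicit. Unset Printing Implicit Defensive.
Import Order.TTheory GRing.Theory Num.Theory.
Local Open Scope ring_scope.

Section Columns.
Variable R : realType.

Lemma xentryE N M (X : 'M[R]_(N, M)) r c (Hc : (c < M)%N) :
  xentry X r c = X r (Ordinal Hc).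
Proof.
rewrite /xentry; case: insubP => [c' _ c'E|]; last by rewrite Hc.
by congr (X r _); apply/val_inj; rewrite /= c'E.
Qed.

Lemma first_cols_widen N M k (Hk : (k <= M)%N) (X : 'M[R]_(N, M)) r (i : 'I_k) :
  first_cols k X r i = X r (widen_ord Hk i).
Proof.
rewrite mxE (xentryE _ _ (leq_trans (ltn_ord i) Hk)).
by congr (X r _); apply/val_inj.
Qed.

Lemma xentry_mul N M P (X : 'M[R]_(N, M)) (Y : 'M[R]_(M, P)) r c :
  xentry (X *m Y) r c = \sum_i X r i * xentry Y i c.
Proof.
rewrite /xentry; case: insubP => [c' _ _|_] /=; first by rewrite mxE.
by rewrite big1 // => i _; rewrite mulr0.
Qed.

Lemma first_cols_mul N M P k (X : 'M[R]_(N, M)) (Y : 'M[R]_(M, P)) :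
  first_cols k (X *m Y) = X *m first_cols k Y.
Proof.
apply/matrixP => r c; rewrite !mxE xentry_mul.
by apply: eq_bigr => i _; rewrite mxE.
Qed.

Lemma xentry_diag N M (X : 'M[R]_(N, M)) (d : 'rV[R]_M) r c :
  xentry (X *m diag_mx d) r c = xentry X r c * xentry d 0 c.
Proof.
rewrite /xentry; case: insubP => [c' _ _|_] /=; last by rewrite mulr0.
by rewrite mul_mx_diag mxE.
Qed.

Lemma first_cols_diag N M k (X : 'M[R]_(N, M)) (d : 'rV[R]_M) :
  first_cols k (X *m diag_mx d) =
  first_cols k X *m diag_mx (\row_(c < k) xentry d 0 c).
Proof. by apply/matrixP => r c; rewrite [in LHS]mxE xentry_diag mul_mx_diag !mxE. Qed.

Lemma first_cols_orth N M k (X : 'M[R]_(N, M)) :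
  (k <= M)%N -> orthonormal_cols X -> orthonormal_cols (first_cols k X).
Proof.
move=> Hk /matrixP XX; apply/matrixP => i j.
have := XX (widen_ord Hk i) (widen_ord Hk j); rewrite !mxE => <-.
by apply: eq_bigr => l _; rewrite !mxE -!(first_cols_widen Hk) !mxE.
Qed.

Lemma orth_inj N M (X : 'M[R]_(N, M)) :
  orthonormal_cols X -> forall c : 'cV[R]_M, X *m c = 0 -> c = 0.
Proof. by move=> XX c Xc; rewrite -[c]mul1mx -XX -mulmxA Xc mulmx0. Qed.

(* Two distinct orthonormal columns cannot both be nonzero multiples of one
   unit column. *)
Lemma orth_parallel_cols N M P (U : 'M[R]_(N, M)) (W : 'M[R]_(N, P))
    a (b b' : 'I_P) (c c' : R) :
  orthonormal_cols U -> orthonormal_cols W -> b != b' ->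
  (forall i, W i b = U i a * c) -> (forall i, W i b' = U i a * c') ->
  c * c' = 0.
Proof.
move=> /matrixP/(_ a a) UU /matrixP/(_ b b') WW bb' Wb Wb'.
move: UU WW; rewrite !mxE eqxx (negbTE bb') mulr0n mulr1n => Ua <-.
rewrite -[c * c']mulr1 -Ua mulr_sumr; apply: eq_bigr => i _.
by rewrite !mxE Wb Wb'; ring.
Qed.

End Columns.

Section Pivot.
Variable R : realType.

Lemma first_argmax_nz N (v : 'cV[R]_N) : v != 0 ->
  exists2 t : 'I_N, first_argmax v = t & v t 0 != 0.
Proof.
move=> v0.
have [i0 vi0] : exists i, v i 0 != 0.
  apply/existsP; apply: contraNT v0 => /existsPn v0; apply/eqP/matrixP => i j.
  by rewrite (ord1 j) mxE; apply/eqP; move: (v0 i); rewrite negbK.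
pose P := fun i : 'I_N => [forall j : 'I_N, `|v j 0| <= `|v i 0|].
have hasP : has P (enum 'I_N).
  apply/hasP; have [m _ Hm] := @arg_maxP _ _ _ i0 xpredT (fun i => `|v i 0|) isT.
  by exists m; [rewrite mem_enum | apply/forallP => j; apply: Hm].
have lt_piv : (first_argmax v < N)%N.
  by rewrite -[X in (_ < X)%N]size_enum_ord -has_find.
exists (Ordinal lt_piv) => //.
have := nth_find i0 hasP.
rewrite -/(first_argmax v) -[first_argmax v]/(nat_of_ord (Ordinal lt_piv)).
rewrite nth_ord_enum => /forallP/(_ i0) vmax.
by rewrite -normr_gt0 (lt_le_trans _ vmax) // normr_gt0.
Qed.

Lemma first_argmax_scale N (v : 'cV[R]_N) (a : R) : a != 0 ->
  first_argmax (a *: v) = first_argmax v.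
Proof.
move=> a0; apply: eq_find => i /=; apply: eq_forallb => j.
by rewrite !mxE !normrM ler_pM2l // normr_gt0.
Qed.

Lemma det_bordered n1 (A : 'M[R]_n1) (B : 'M_(n1, 1)) (C : 'M_(1, n1)) (D : 'M_1) :
  A \in unitmx -> \det (block_mx A B C D) = \det A * (D - C *m invmx A *m B) 0 0.
Proof.
move=> A_unit.
have -> : block_mx A B C D =
  block_mx 1%:M 0 (C *m invmx A) 1%:M *m block_mx A B 0 (D - C *m invmx A *m B).
  by rewrite mulmx_block !mul1mx !mul0mx !addr0 mulmxKV // addrC subrK.
rewrite (det_mulmx (block_mx 1%:M 0 (C *m invmx A) 1%:M)).
by rewrite det_lblock det_ublock !det1 !mul1r det_mx11.
Qed.

End Pivot.

Section DEIMScaling.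
Variables (R : realType) (N K : nat) (X : 'M[R]_(N, K)).

(* The column x_{j+1} of X (0-based column j). *)
Let xcol j : 'cV[R]_N := \matrix_(r < N, c < 1) xentry X r j.

Lemma size_deim j : size (deim_rec X j) = j.
Proof. by elim: j => //= j IH; rewrite size_rcons IH. Qed.

Lemma first_cols_S j : first_cols (j + 1) X = row_mx (first_cols j X) (xcol j).
Proof.
apply/matrixP => r c; rewrite !mxE.
by case: splitP => [c' ->|c' ->]; rewrite !mxE // (ord1 c') addn0.
Qed.

Lemma selmx_rcons (s : seq nat) t j : size s = j ->
  selmx N (j + 1) (rcons s t) =
  row_mx (selmx N j s) (\matrix_(r < N, c < 1) ((nat_of_ord r == t)%:R : R)).
Proof.
move=> sj; apply/matrixP => r c; rewrite !mxE.
case: splitP => [c' ->|c' ->]; rewrite !mxE nth_rcons sj ?ltn_ord //.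
by rewrite (ord1 c') addn0 ltnn eqxx.
Qed.

Hypothesis X_inj : forall c : 'cV[R]_K, X *m c = 0 -> c = 0.

(* A residual is never zero: it is x_{j+1} minus a combination of x_1..x_j. *)
Lemma residual_nz s j : (j < K)%N -> deim_residual X s j != 0.
Proof.
move=> jK; apply/eqP => res0.
pose q := invmx ((selmx N j s)^T *m first_cols j X) *m (selmx N j s)^T *m xcol j.
pose ej : 'cV[R]_K := \col_i xentry (1%:M : 'M[R]_K) i j.
pose Ej : 'M[R]_(K, j) := first_cols j (1%:M : 'M[R]_K).
have xE : xcol j = X *m ej.
  apply/matrixP => r c; rewrite !mxE -{1}[X]mulmx1 xentry_mul.
  by apply: eq_bigr => i _; rewrite mxE.
have XjE : first_cols j X = X *m Ej by rewrite -first_cols_mul mulmx1.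
have : X *m (ej - Ej *m q) = 0.
  by rewrite mulmxBr mulmxA -XjE -xE -res0 /deim_residual /q -!mulmxA.
move/X_inj/matrixP/(_ (Ordinal jK) 0)/eqP.
rewrite !mxE (xentryE _ _ jK) mxE eqxx big1 ?subr0 ?oner_eq0 // => l _.
rewrite !mxE (xentryE _ _ (ltn_trans (ltn_ord l) jK)) mxE -val_eqE /=.
by rewrite (gtn_eqF (ltn_ord l)) mul0r.
Qed.

(* The interpolation systems S_j^T X_j solved by DEIM are all invertible:
   the new system is bordered, with Schur complement the residual's
   pivot entry. *)
Lemma deim_unit j : (j <= K)%N ->
  (selmx N j (deim_rec X j))^T *m first_cols j X \in unitmx.
Proof.
elim: j => [_|j IH jK]; first by rewrite unitmxE det_mx00 unitr1.
have [t tE rt] := first_argmax_nz (residual_nz (deim_rec X j) jK).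
rewrite /= tE -[j.+1]addn1 (selmx_rcons _ (size_deim j)) first_cols_S.
set s := deim_rec X j; set S := selmx N j s; set Xj := first_cols j X.
set e := \matrix_(r < N, c < 1) _.
have M_unit : S^T *m Xj \in unitmx by apply: IH; apply: ltnW.
have schur : e^T *m xcol j - e^T *m Xj *m invmx (S^T *m Xj) *m (S^T *m xcol j)
             = e^T *m deim_residual X s j.
  by rewrite /deim_residual mulmxBr !mulmxA.
have pick_t : (e^T *m deim_residual X s j) 0 0 = deim_residual X s j t 0.
  rewrite mxE (bigD1 t) //= big1 ?addr0 => [|i it]; rewrite !mxE.
    by rewrite eqxx mul1r.
  by rewrite (_ : (nat_of_ord i == t) = false) ?mul0r //; apply/negbTE.
rewrite tr_row_mx mul_col_row unitmxE det_bordered // schur pick_t.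
by rewrite unitfE mulf_neq0 // -unitfE -unitmxE.
Qed.

Lemma residual_scale (d : 'rV[R]_K) s j : (j < K)%N ->
  (forall i, d 0 i != 0) ->
  (selmx N j s)^T *m first_cols j X \in unitmx ->
  deim_residual (X *m diag_mx d) s j = xentry d 0 j *: deim_residual X s j.
Proof.
move=> jK d0 M_unit.
rewrite /deim_residual first_cols_diag.
set Xj := first_cols j X; set S := selmx N j s.
set D := diag_mx (\row_(c < j) xentry d 0 c).
have D_unit : D \in unitmx.
  rewrite unitmxE det_diag unitfE; apply/prodf_neq0 => i _.
  by rewrite mxE (xentryE _ _ (ltn_trans (ltn_ord i) jK)).
have xE : \matrix_(r < N, c < 1) xentry (X *m diag_mx d) r j = xentry d 0 j *: xcol j.
  by apply/matrixP => r c; rewrite !mxE xentry_diag mulrC.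
have invE : D *m invmx (S^T *m (Xj *m D)) = invmx (S^T *m Xj).
  have rinv : (S^T *m Xj) *m (D *m invmx (S^T *m (Xj *m D))) = 1%:M.
    by rewrite mulmxA -(mulmxA S^T Xj D) mulmxV // mulmxA unitmx_mul M_unit.
  by rewrite -[LHS](mulKmx M_unit) rinv mulmx1.
by rewrite xE -[Xj *m D *m _]mulmxA invE scalerBr -!scalemxAr.
Qed.

Lemma DEIM_scale (d : 'rV[R]_K) : (forall i, d 0 i != 0) ->
  DEIM (X *m diag_mx d) = DEIM X.
Proof.
move=> d0; rewrite /DEIM.
suff deimE j : (j <= K)%N -> deim_rec (X *m diag_mx d) j = deim_rec X j by apply: deimE.
elim: j => [//|j IH jK] /=.
rewrite IH ?(ltnW jK) // residual_scale ?deim_unit ?(ltnW jK) //.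
by rewrite first_argmax_scale // (xentryE _ _ jK).
Qed.

End DEIMScaling.

Section TwoSVDs.
Variables (R : realType) (p q n r : nat) (G : 'M[R]_(p, q)).
Variables (U : 'M[R]_(p, n)) (lam : 'rV[R]_n) (V : 'M[R]_(q, n)).
Variables (W : 'M[R]_(p, r)) (s : 'rV[R]_r) (Z : 'M[R]_(q, r)).
Hypotheses (HU : is_svd G U lam V) (HW : is_svd G W s Z).

(* C = U^T W holds the coordinates of the columns of W in the basis U. *)
Let C := U^T *m W.

(* Left singular vectors for different singular values are orthogonal:
   from diag(lam) E = C diag(s) and diag(lam) C = E diag(s), E = V^T Z,
   C_ab != 0 forces lam_a^2 = s_b^2. *)
Lemma svd_coupling a b : C a b != 0 -> lam 0 a = s 0 b.
Proof.
move=> Cab; case: HU => oU oV lam0 _ EG; case: HW => oW oZ s0 _ EG'.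
pose E := V^T *m Z.
have lamE : diag_mx lam *m E = C *m diag_mx s.
  have UG : U^T *m G = diag_mx lam *m V^T by rewrite EG !mulmxA oU mul1mx.
  have GZ : G *m Z = W *m diag_mx s by rewrite EG' -mulmxA oZ mulmx1.
  by rewrite /E /C mulmxA -UG -mulmxA GZ mulmxA.
have lamC : diag_mx lam *m C = E *m diag_mx s.
  have VG : V^T *m G^T = diag_mx lam *m U^T.
    by rewrite EG !trmx_mul trmxK tr_diag_mx !mulmxA oV mul1mx.
  have GW : G^T *m W = Z *m diag_mx s.
    by rewrite EG' !trmx_mul trmxK tr_diag_mx -!mulmxA oW mulmx1.
  by rewrite /E /C mulmxA -VG -mulmxA GW mulmxA.
have e1 : lam 0 a * E a b = C a b * s 0 b.
  by move/matrixP/(_ a b): lamE; rewrite mul_diag_mx mul_mx_diag !mxE.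
have e2 : lam 0 a * C a b = E a b * s 0 b.
  by move/matrixP/(_ a b): lamC; rewrite mul_diag_mx mul_mx_diag !mxE.
apply/eqP; rewrite -(@eqrXn2 _ 2) // !expr2; apply/eqP/(mulIf Cab).
by rewrite -mulrA e2 mulrA e1 -mulrA mulrC.
Qed.

Lemma col_expand b : s 0 b != 0 -> forall i, W i b = \sum_a U i a * C a b.
Proof.
case: HU => oU oV _ _ EG; case: HW => oW oZ _ _ EG' s0 i.
have WsE : W *m diag_mx s = U *m (diag_mx lam *m (V^T *m Z)).
  by rewrite -[LHS]mulmx1 -oZ !mulmxA -EG' EG.
have : U *m C *m diag_mx s = W *m diag_mx s.
  by rewrite /C -!mulmxA WsE (mulmxA U^T U) oU mul1mx.
by move/matrixP/(_ i b); rewrite !mul_mx_diag !mxE => /(mulIf s0) <-.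
Qed.

(* Consequently such a column has a nonzero coordinate, being a unit vector. *)
Lemma col_support b : s 0 b != 0 -> exists a, C a b != 0.
Proof.
move=> s0; apply/existsP; apply: contraT => /existsPn C0.
case: HW => /matrixP/(_ b b) + _ _ _ _; rewrite !mxE eqxx big1 => [/eqP|i _].
  by rewrite eq_sym oner_eq0.
rewrite !mxE (col_expand s0) big1 ?mul0r // => a _.
by move: (C0 a); rewrite negbK => /eqP ->; rewrite mulr0.
Qed.

End TwoSVDs.

Lemma row_support (R : realType) p q n r (G : 'M[R]_(p, q)) U (lam : 'rV[R]_n) V
    W (s : 'rV[R]_r) Z a :
  is_svd G U lam V -> is_svd G W s Z -> lam 0 a != 0 ->
  exists b, (U^T *m W) a b != 0.
Proof.
move=> HU HW lam0; have [b Cb] := col_support HW HU lam0.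
by exists b; rewrite -[U^T *m W]trmxK trmx_mul trmxK mxE.
Qed.

Definition simple_top (R : realType) n k (l : 'rV[R]_n) : Prop :=
  forall i j : 'I_n, (i < k)%N -> j = i.+1 :> nat -> l 0 j < l 0 i.

Lemma widen_ltn m p (Hmp : (m <= p)%N) (i : 'I_m) (b : 'I_p) :
  (b < i)%N -> exists2 j : 'I_m, widen_ord Hmp j = b & (j < i)%N.
Proof.
move=> bi; exists (Ordinal (ltn_trans bi (ltn_ord i))) => //.
exact: val_inj.
Qed.

Section DominantSingularVectors.
Variables (R : realType) (p q n r k : nat) (G : 'M[R]_(p, q)).
Variables (U : 'M[R]_(p, n)) (lam : 'rV[R]_n) (V : 'M[R]_(q, n)).
Variables (W : 'M[R]_(p, r)) (s : 'rV[R]_r) (Z : 'M[R]_(q, r)).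
Hypotheses (HU : is_svd G U lam V) (HW : is_svd G W s Z).
Hypotheses (kr : (k <= r)%N) (kn : (k < n)%N) (lam_simple : simple_top k lam).

Let C := U^T *m W.
Let kn' := ltnW kn.

Lemma lam_gt (a b : 'I_n) : (a < b)%N -> (a < k)%N -> lam 0 b < lam 0 a.
Proof.
move=> ab ak; have a1n : (a.+1 < n)%N by apply: leq_ltn_trans kn.
apply: le_lt_trans (lam_simple (j := Ordinal a1n) ak erefl).
by case: HU => _ _ _ lam_dec _; apply: (lam_dec (Ordinal a1n)).
Qed.

Lemma lam_pos (a : 'I_n) : (a < k)%N -> 0 < lam 0 a.
Proof.
move=> ak; have a1n : (a.+1 < n)%N by apply: leq_ltn_trans kn.
by case: HU => _ _ lam0 _ _; apply: le_lt_trans (lam_simple (j := Ordinal a1n) ak erefl).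
Qed.

Lemma lam_inj (a b : 'I_n) : (a < k)%N -> lam 0 b = lam 0 a -> b = a.
Proof.
move=> ak ba; case: (ltngtP a b) => [ab|b_a|/val_inj //].
  by move: (lam_gt ab ak); rewrite ba ltxx.
by move: (lam_gt b_a (ltn_trans b_a ak)); rewrite ba ltxx.
Qed.

Lemma col_single (a : 'I_n) (b : 'I_r) : (a < k)%N -> s 0 b = lam 0 a ->
  C a b != 0 /\ forall i, W i b = U i a * C a b.
Proof.
move=> ak sb; have s0 : s 0 b != 0 by rewrite sb gt_eqF // lam_pos.
have only_a a' : a' != a -> C a' b = 0.
  move=> a'a; apply/eqP; apply: contraNT a'a => Ca'b; apply/eqP.
  by apply: lam_inj ak _; rewrite (svd_coupling HU HW Ca'b) sb.
split.
  have [a' Ca'b] := col_support HU HW s0.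
  by case: (eqVneq a' a) Ca'b => [<- //|/only_a ->]; rewrite eqxx.
move=> i; rewrite (col_expand HU HW s0) (bigD1 a) //= big1 ?addr0 // => a' /only_a ->.
by rewrite mulr0.
Qed.

(* The first k singular values of the two decompositions agree, by strong
   induction: lam_i <= s_i because row i of C is nonzero and lam_i differs
   from the earlier (shared) singular values; and s_i = lam_a for some a <= i
   since column i of C is nonzero, where a < i would make two columns of W
   parallel to column a of U. *)
Lemma dominant_sv_agree (i : 'I_k) : s 0 (widen_ord kr i) = lam 0 (widen_ord kn' i).
Proof.
suff agree m (i' : 'I_k) : (i' < m)%N -> s 0 (widen_ord kr i') = lam 0 (widen_ord kn' i').
  exact: agree (ltnSn i).
elim: m i' => [//|m IH] {}i; rewrite ltnS => im.
have IHi (j : 'I_k) : (j < i)%N -> s 0 (widen_ord kr j) = lam 0 (widen_ord kn' j).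
  by move=> ji; apply: IH; apply: leq_trans im.
set a0 := widen_ord kn' i; set b0 := widen_ord kr i.
have a0k : (a0 < k)%N := ltn_ord i.
have lower : lam 0 a0 <= s 0 b0.
  have [b Ca0b] := row_support HU HW (lt0r_neq0 (lam_pos a0k)).
  have sb := svd_coupling HU HW Ca0b.
  have ib : (i <= b)%N.
    rewrite leqNgt; apply/negP => bi; have [j jb ji] := widen_ltn kr bi.
    have : widen_ord kn' j = a0 by apply: lam_inj a0k _; rewrite -IHi // jb sb.
    by move/(congr1 val) => /= ij; rewrite ij ltnn in ji.
  by rewrite sb; case: HW => _ _ _ s_dec _; apply: s_dec.
have s0 : s 0 b0 != 0 by rewrite gt_eqF // (lt_le_trans (lam_pos a0k) lower).
have [a Cab0] := col_support HU HW s0.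
have la := svd_coupling HU HW Cab0.
have ai : (a <= i)%N.
  rewrite leqNgt; apply/negP => ia.
  by move: (@lam_gt a0 a ia a0k); rewrite la ltNge lower.
move: ai; rewrite leq_eqVlt => /orP [/eqP ai|ai].
  by rewrite (_ : a0 = a) ?la //; apply/val_inj.
have [j ja ji] := widen_ltn kn' ai.
have ak : (a < k)%N := ltn_trans ai (ltn_ord i).
have [Cj Wj] := col_single ak (etrans (IHi j ji) (congr1 _ ja)).
have [_ Wb0] := col_single ak (esym la).
have jb0 : widen_ord kr j != b0 by rewrite -val_eqE /= ltn_eqF.
case: HU HW => oU _ _ _ _ [oW _ _ _ _].
move/eqP: (orth_parallel_cols oU oW jb0 Wj Wb0).
by rewrite mulf_eq0 (negbTE Cj) (negbTE Cab0).
Qed.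

Lemma dominant_cols_scaled : exists2 c : 'rV[R]_k, (forall i, c 0 i != 0) &
  first_cols k W = first_cols k U *m diag_mx c.
Proof.
have single (i : 'I_k) :=
  @col_single (widen_ord kn' i) _ (ltn_ord i) (dominant_sv_agree i).
exists (\row_i C (widen_ord kn' i) (widen_ord kr i)).
  by move=> i; rewrite mxE; case: (single i).
apply/matrixP => rho i.
rewrite mul_mx_diag [RHS]mxE !(first_cols_widen kr) !(first_cols_widen kn') mxE.
by case: (single i) => _ ->.
Qed.

End DominantSingularVectors.

Lemma svd_tr (R : realType) p q n (G : 'M[R]_(p, q)) U (l : 'rV[R]_n) V :
  is_svd G U l V -> is_svd G^T V l U.
Proof.
case=> oU oV l0 l_dec EG; split => //.
by rewrite EG !trmx_mul trmxK tr_diag_mx !mulmxA.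
Qed.

Lemma DEIM_dominant_left (R : realType) p q n r k (G : 'M[R]_(p, q))
    U (lam : 'rV[R]_n) V W (s : 'rV[R]_r) Z :
  is_svd G U lam V -> is_svd G W s Z -> (k <= r)%N -> (k < n)%N ->
  simple_top k lam -> DEIM (first_cols k W) = DEIM (first_cols k U).
Proof.
move=> HU HW kr kn lam_simple.
have [c c0 ->] := dominant_cols_scaled HU HW kr kn lam_simple.
apply: DEIM_scale c0; case: HU => oU _ _ _ _.
exact: orth_inj (first_cols_orth (ltnW kn) oU).
Qed.

Lemma DEIM_dominant_right (R : realType) p q n r k (G : 'M[R]_(p, q))
    U (lam : 'rV[R]_n) V W (s : 'rV[R]_r) Z :
  is_svd G U lam V -> is_svd G W s Z -> (k <= r)%N -> (k < n)%N ->
  simple_top k lam -> DEIM (first_cols k Z) = DEIM (first_cols k V).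
Proof. by move=> /svd_tr HU /svd_tr HW; apply: DEIM_dominant_left HU HW. Qed.

Lemma pinv_orth_unit (R : realType) d n (V : 'M[R]_(d, n)) (T : 'M[R]_n) Bp :
  orthonormal_cols V -> T \in unitmx -> is_pinv (V *m T) Bp ->
  Bp = invmx T *m V^T.
Proof.
move=> oV T_unit [BXB XBX BX_sym XB_sym].
have BpV : Bp *m V = invmx T.
  have TBT : T *m (Bp *m V) *m T = T.
    by have := congr1 (mulmx V^T) BXB; rewrite !mulmxA oV !mul1mx -!mulmxA.
  have := congr1 (fun M => invmx T *m M *m invmx T) TBT.
  by rewrite /= !mulmxA mulVmx // !mul1mx mulmxK.
have BpE : Bp = Bp *m Bp^T *m T^T *m V^T.
  by rewrite -{1}XBX -mulmxA -BX_sym !trmx_mul !mulmxA.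
have BpV' : Bp *m V = Bp *m Bp^T *m T^T by rewrite {1}BpE -mulmxA oV mulmx1.
by rewrite {1}BpE -BpV BpV'.
Qed.

Section GSVD.
Variables (R : realType) (m d n : nat) (A : 'M[R]_(m, n)) (B : 'M[R]_(d, n)).
Variables (U : 'M[R]_(m, n)) (V : 'M[R]_(d, n)) (Y : 'M[R]_n) (gam sig : 'rV[R]_n).
Hypothesis gsvdAB : is_gsvd A B U V Y gam sig.

Let lam := \row_i (gam 0 i / sig 0 i).
Let T := diag_mx sig *m Y^T.

(* A zero sigma_i would make Sigma singular, so B = V Sigma Y^T would have
   rank below n. *)
Lemma gsvd_sig_pos : \rank B = n -> forall i, 0 < sig 0 i.
Proof.
case: gsvdAB => _ _ gs _ [_ EB] rkB i.
rewrite lt_def andbC; case: (gs i) => _ /andP[-> _] _ /=.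
apply/eqP => sig0.
have : diag_mx sig \notin unitmx.
  by rewrite unitmxE det_diag unitfE (bigD1 i) //= sig0 mul0r eqxx.
rewrite -row_free_unit /row_free; apply/negP/negPn; apply/eqP/anti_leq.
rewrite rank_leq_row -{1}rkB EB.
exact: leq_trans (mxrankM_maxl _ _) (mxrankM_maxr _ _).
Qed.

Hypothesis sig_pos : forall i, 0 < sig 0 i.

Lemma gsvd_T_unit : T \in unitmx.
Proof.
rewrite unitmx_mul unitmx_tr; case: gsvdAB => _ -> _ _ _; rewrite andbT.
by rewrite unitmxE det_diag unitfE; apply/prodf_neq0 => i _; rewrite gt_eqF.
Qed.

Lemma gsvd_factor : A = U *m diag_mx lam *m T /\ B = V *m T.
Proof.
case: gsvdAB => _ _ _ _ [-> ->]; split; last by rewrite mulmxA.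
rewrite /T !mulmxA -(mulmxA U (diag_mx lam)) mul_diag_mx; congr (U *m _ *m _).
apply/matrixP => i j; rewrite !mxE.
by case: (eqVneq i j) => [->|_]; rewrite ?mulr0n ?mulr0 // !mulr1n divfK ?gt_eqF.
Qed.

(* Any factorization U diag(lam) Q^T with Q orthonormal is an SVD, since
   the lam_i are nonnegative and nonincreasing. *)
Lemma gsvd_svd q (G : 'M[R]_(m, q)) (Q : 'M[R]_(q, n)) :
  orthonormal_cols Q -> G = U *m diag_mx lam *m Q^T -> is_svd G U lam Q.
Proof.
case: gsvdAB => [[oU _] _ gs lam_dec _] oQ EG; split => // [i|i j ij].
  have sig0 := ltW (sig_pos i).
  by rewrite mxE divr_ge0 //; case: (gs i) => /andP[].
rewrite !mxE ler_pdivrMr // mulrAC ler_pdivlMr //; exact: lam_dec.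
Qed.

Lemma gsvd_simple_top k : strict_top k gam sig -> simple_top k lam.
Proof.
move=> gs_strict i j ik ji; rewrite !mxE ltr_pdivrMr // mulrAC ltr_pdivlMr //.
exact: gs_strict.
Qed.

End GSVD.

Lemma gsvd_pinv_svd (R : realType) m d n (A : 'M[R]_(m, n)) (B : 'M[R]_(d, n))
    U V Y (gam sig : 'rV[R]_n) Bp :
  is_gsvd A B U V Y gam sig -> \rank B = n -> is_pinv B Bp ->
  is_svd (A *m Bp) U (\row_i (gam 0 i / sig 0 i)) V.
Proof.
move=> gsvdAB rkB pinvB; have sig_pos := gsvd_sig_pos gsvdAB rkB.
have T_unit := gsvd_T_unit gsvdAB sig_pos.
have [EA EB] := gsvd_factor gsvdAB sig_pos.
have oV : orthonormal_cols V by case: gsvdAB => [[]].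
rewrite EB in pinvB; apply: (gsvd_svd gsvdAB sig_pos oV).
by rewrite EA (pinv_orth_unit oV T_unit pinvB) [_ *m (invmx _ *m _)]mulmxA mulmxK.
Qed.

Lemma gsvd_identity (R : realType) m n (A : 'M[R]_(m, n)) U V Y (gam sig : 'rV[R]_n) :
  is_gsvd A 1%:M U V Y gam sig ->
  [/\ forall i, 0 < sig 0 i, is_svd A U (\row_i (gam 0 i / sig 0 i)) V
    & V = Y *m diag_mx sig].
Proof.
move=> gsvdA; have sig_pos := gsvd_sig_pos gsvdA (mxrank1 R n).
have [EA EB] := gsvd_factor gsvdA sig_pos.
have oV : orthonormal_cols V by case: gsvdA => [[]].
have VtE : V^T = diag_mx sig *m Y^T by rewrite -[V^T]mulmx1 EB mulmxA oV mul1mx.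
split => //; first by apply: (gsvd_svd gsvdA sig_pos oV); rewrite EA VtE.
by rewrite -[V]trmxK VtE trmx_mul trmxK tr_diag_mx.
Qed.

Lemma unit_cols_inj (R : realType) n k (Y : 'M[R]_n) : (k <= n)%N -> Y \in unitmx ->
  forall c : 'cV[R]_k, first_cols k Y *m c = 0 -> c = 0.
Proof.
move=> kn Y_unit c; rewrite -[Y]mulmx1 first_cols_mul -mulmxA => Yc0.
have orth1 : orthonormal_cols (1%:M : 'M[R]_n) by rewrite /orthonormal_cols trmx1 mulmx1.
apply: (orth_inj (first_cols_orth kn orth1)).
by rewrite -(mulKmx Y_unit (_ *m c)) Yc0 mulmx0.
Qed.

Lemma DEIM_first_cols_scale (R : realType) n k (Y : 'M[R]_n) (d : 'rV[R]_n) :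
  (k <= n)%N -> Y \in unitmx -> (forall i, d 0 i != 0) ->
  DEIM (first_cols k (Y *m diag_mx d)) = DEIM (first_cols k Y).
Proof.
move=> kn Y_unit d0; rewrite first_cols_diag; apply: DEIM_scale.
  exact: unit_cols_inj.
by move=> i; rewrite mxE (xentryE _ _ (leq_trans (ltn_ord i) kn)).
Qed.

Theorem mainTheorem2 (R : realType) :
  (* part (i) *)
  (forall (m d n k : nat) (A : 'M[R]_(m, n)) (B : 'M[R]_(d, n))
     (U : 'M[R]_(m, n)) (V : 'M[R]_(d, n)) (Y : 'M[R]_n) (gam sig : 'rV[R]_n)
     (Bp : 'M[R]_(n, d)),
     (n <= m)%N -> (n <= d)%N -> \rank B = n ->
     is_gsvd A B U V Y gam sig ->
     (1 <= k)%N -> (k < n)%N -> strict_top k gam sig ->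
     is_pinv B Bp ->
     let G := A *m Bp in
     [/\ (forall i : 'I_n, 0 < sig 0 i),
         is_svd G U (\row_i (gam 0 i / sig 0 i)) V,
         (forall r (W : 'M[R]_(m, r)) (s : 'rV[R]_r) (Z : 'M[R]_(d, r)),
            (k <= r)%N -> is_svd G W s Z ->
            DEIM (first_cols k W) = DEIM (first_cols k U))
       & (forall r (W : 'M[R]_(m, r)) (s : 'rV[R]_r) (Z : 'M[R]_(d, r)),
            (k <= r)%N -> is_svd G W s Z ->
            DEIM (first_cols k Z) = DEIM (first_cols k V))]) /\
  (* part (ii): d = n and B = I_n *)
  (forall (m n k : nat) (A : 'M[R]_(m, n))
     (U : 'M[R]_(m, n)) (V : 'M[R]_n) (Y : 'M[R]_n) (gam sig : 'rV[R]_n),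
     (n <= m)%N ->
     is_gsvd A (1%:M : 'M[R]_n) U V Y gam sig ->
     (1 <= k)%N -> (k < n)%N -> strict_top k gam sig ->
     let sA := DEIM (first_cols k U) in
     let p := DEIM (first_cols k Y) in
     forall r (W : 'M[R]_(m, r)) (s : 'rV[R]_r) (Z : 'M[R]_(n, r)),
       (k <= r)%N -> is_svd A W s Z ->
       [/\ DEIM (first_cols k W) = sA,
           DEIM (first_cols k Z) = p,
           A *m selmx n k (DEIM (first_cols k Z)) = A *m selmx n k p
         & (selmx m k (DEIM (first_cols k W)))^T *m A = (selmx m k sA)^T *m A]).
Proof.
split.
- move=> m d n k A B U V Y gam sig Bp _ _ rkB gsvdAB _ kn gs_strict pinvB G.
  have sig_pos := gsvd_sig_pos gsvdAB rkB.
  have svdG := gsvd_pinv_svd gsvdAB rkB pinvB.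
  have lam_simple := gsvd_simple_top sig_pos gs_strict.
  split => // r W s Z kr svdW.
    exact: DEIM_dominant_left svdG svdW kr kn lam_simple.
  exact: DEIM_dominant_right svdG svdW kr kn lam_simple.
- move=> m n k A U V Y gam sig _ gsvdA _ kn gs_strict sA p r W s Z kr svdW.
  have [sig_pos svdA VE] := gsvd_identity gsvdA.
  have lam_simple := gsvd_simple_top sig_pos gs_strict.
  have sAE : DEIM (first_cols k W) = sA.
    exact: DEIM_dominant_left svdA svdW kr kn lam_simple.
  have pE : DEIM (first_cols k Z) = p.
    rewrite (DEIM_dominant_right svdA svdW kr kn lam_simple) VE.
    apply: DEIM_first_cols_scale (ltnW kn) _ _; first by case: gsvdA.
    by move=> i; rewrite gt_eqF.
  by rewrite sAE pE.
Qed.
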